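(* Let $X_1,\dots,X_n$ be locally bounded $F$-spaces and $\Phi$ a Young function satisfying the Mulholland condition. Then the $F$-space $\big(\bigoplus_{i=1}^nX_i,d_\Phi\big)$ is locally bounded.
   Context: An $F$-space is a vector space with a complete translation-invariant metric $d$ for which addition and scalar multiplication are continuous; $\|x\|_i=d_i(x,0)$. $d_\Phi((x_i),(y_i))=\Phi^{-1}\big(\sum_i\Phi(\|x_i-y_i\|_i)\big)$. A topological vector space is locally bounded if there is an open neighborhood $A$ of $0$ such that for every open neighborhood $U$ of $0$ there is $t>0$ with $A\subset sU$ for all $s>t$. A Young function is a convex, left semicontinuous, even $\Phi:\mathbb R\to[0,\infty]$ with $\Phi(0)=0$, $\lim_{x\to\infty}\Phi(x)=\infty$; the Mulholland condition means $\Phi$ is continuous, strictly increasing on $[0,\infty)$, and $\log\Phi(x)$ is convex in $\log x$. *)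

From Stdlib Require Import Reals ClassicalEpsilon.
From mathcomp Require Import ssreflect ssrfun ssrbool eqtype ssrnat fintype bigop.
Set Implicit Arguments.
Unset Strict Implicit.
Open Scope R_scope.

Definition is_vector_space (V : Type) (zero : V) (add : V -> V -> V)
  (opp : V -> V) (smul : R -> V -> V) : Prop :=
  (forall x y z, add x (add y z) = add (add x y) z) /\
  (forall x y, add x y = add y x) /\
  (forall x, add x zero = x) /\
  (forall x, add x (opp x) = zero) /\
  (forall a b x, smul a (smul b x) = smul (a * b) x) /\
  (forall x, smul 1 x = x) /\
  (forall a x y, smul a (add x y) = add (smul a x) (smul a y)) /\
  (forall a b x, smul (a + b) x = add (smul a x) (smul b x)).

Definition is_metric (V : Type) (d : V -> V -> R) : Prop :=
  (forall x y, 0 <= d x y) /\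
  (forall x y, d x y = 0 <-> x = y) /\
  (forall x y, d x y = d y x) /\
  (forall x y z, d x z <= d x y + d y z).

Definition is_complete (V : Type) (d : V -> V -> R) : Prop :=
  forall u : nat -> V,
    (forall e, 0 < e -> exists N : nat, forall m k : nat,
        (N <= m)%coq_nat -> (N <= k)%coq_nat -> d (u m) (u k) < e) ->
    exists l : V, forall e, 0 < e -> exists N : nat, forall m : nat,
        (N <= m)%coq_nat -> d (u m) l < e.

Definition translation_invariant (V : Type) (add : V -> V -> V) (d : V -> V -> R) :=
  forall x y z, d (add x z) (add y z) = d x y.

Definition add_continuous (V : Type) (add : V -> V -> V) (d : V -> V -> R) :=
  forall x y e, 0 < e -> exists delta, 0 < delta /\ forall x' y',
    d x x' < delta -> d y y' < delta -> d (add x y) (add x' y') < e.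

Definition smul_continuous (V : Type) (smul : R -> V -> V) (d : V -> V -> R) :=
  forall a x e, 0 < e -> exists delta, 0 < delta /\ forall b x',
    Rabs (a - b) < delta -> d x x' < delta -> d (smul a x) (smul b x') < e.

Record FSpace := {
  fs_car :> Type;
  fs_zero : fs_car;
  fs_add : fs_car -> fs_car -> fs_car;
  fs_opp : fs_car -> fs_car;
  fs_smul : R -> fs_car -> fs_car;
  fs_dist : fs_car -> fs_car -> R;
  fs_vs : is_vector_space fs_zero fs_add fs_opp fs_smul;
  fs_metric : is_metric fs_dist;
  fs_tinv : translation_invariant fs_add fs_dist;
  fs_complete : is_complete fs_dist;
  fs_add_cont : add_continuous fs_add fs_dist;
  fs_smul_cont : smul_continuous fs_smul fs_dist
}.

Definition fs_sub (X : FSpace) (x y : fs_car X) : fs_car X := fs_add x (fs_opp y).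
Definition fs_norm (X : FSpace) (x : fs_car X) : R := fs_dist x (fs_zero X).

Definition d_open (V : Type) (d : V -> V -> R) (A : V -> Prop) : Prop :=
  forall x, A x -> exists r, 0 < r /\ forall y, d x y < r -> A y.

Definition scale_set (V : Type) (smul : R -> V -> V) (s : R) (U : V -> Prop) : V -> Prop :=
  fun v => exists u, U u /\ v = smul s u.

Definition locally_bounded (V : Type) (zero : V) (smul : R -> V -> V)
  (d : V -> V -> R) : Prop :=
  exists A : V -> Prop, d_open d A /\ A zero /\
    forall U : V -> Prop, d_open d U -> U zero ->
      exists t, 0 < t /\ forall s, s > t ->
        forall x, A x -> scale_set smul s U x.

Definition FSpace_locally_bounded (X : FSpace) : Prop :=
  locally_bounded (fs_zero X) (@fs_smul X) (@fs_dist X).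

(* Phi is taken real-valued: the Mulholland condition (strictly increasing on
   [0,oo)) forces finiteness of an extended-valued Young function. *)
Definition young_function (Phi : R -> R) : Prop :=
  (forall x y t, 0 <= t <= 1 ->
     Phi (t * x + (1 - t) * y) <= t * Phi x + (1 - t) * Phi y) /\
  (forall x e, 0 < e -> exists delta, 0 < delta /\
     forall y, Rabs (y - x) < delta -> Phi x - e < Phi y) /\
  (forall x, Phi (- x) = Phi x) /\
  (forall x, 0 <= Phi x) /\
  Phi 0 = 0 /\
  (forall M, exists N, forall x, N <= x -> M <= Phi x).

Definition mulholland (Phi : R -> R) : Prop :=
  (forall x, continuity_pt Phi x) /\
  (forall x y, 0 <= x -> x < y -> Phi x < Phi y) /\
  (* log Phi(x) is convex in log x, i.e. u |-> ln (Phi (exp u)) is convex *)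
  (forall u v t, 0 <= t <= 1 ->
     ln (Phi (exp (t * u + (1 - t) * v)))
       <= t * ln (Phi (exp u)) + (1 - t) * ln (Phi (exp v))).

Definition Phi_inv (Phi : R -> R) (s : R) : R :=
  epsilon (inhabits 0) (fun y => 0 <= y /\ Phi y = s).

Definition dsum (n : nat) (X : 'I_n -> FSpace) : Type := forall i : 'I_n, X i.

Definition dsum_zero (n : nat) (X : 'I_n -> FSpace) : dsum X :=
  fun i => fs_zero (X i).

Definition dsum_smul (n : nat) (X : 'I_n -> FSpace) (a : R) (x : dsum X) : dsum X :=
  fun i => fs_smul a (x i).

Definition d_Phi (Phi : R -> R) (n : nat) (X : 'I_n -> FSpace) (x y : dsum X) : R :=
  Phi_inv Phi (\big[Rplus/0]_(i < n) Phi (@fs_norm (X i) (@fs_sub (X i) (x i) (y i)))).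

From Stdlib Require Import Reals.
From mathcomp Require Import ssreflect fintype.
From Stdlib Require Import Lra ClassicalEpsilon ChoiceFacts FunctionalExtensionality.
From mathcomp Require Import bigop.
Set Implicit Arguments.
Unset Strict Implicit.
Open Scope R_scope.

(* d_Phi induces the product topology on the direct sum.  Since Phi is
   increasing, every coordinate distance d_i(x_i, y_i) is at most d_Phi(x, y);
   conversely, by continuity of Phi at 0, d_Phi(x, y) < r as soon as all
   d_i(x_i, y_i) < delta with n Phi(delta) < Phi(r).  A finite product of
   bounded neighbourhoods of 0 is then a bounded neighbourhood of 0: for a
   product of balls, take t larger than each of the finitely many t_i. *)

Lemma ord_pos_lower_bound n (f : 'I_n -> R) :
  (forall i, 0 < f i) -> exists r, 0 < r /\ forall i, r <= f i.
Proof.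
elim: n f => [|n IH] f f_pos; first by exists 1; split; [lra | case].
have [r [r_pos r_le]] := IH (fun j => f (lift ord0 j)) (fun j => f_pos _).
exists (Rmin r (f ord0)); split; first exact: Rmin_pos.
move=> i; case: (unliftP ord0 i) => [j ->|->]; last exact: Rmin_r.
exact: Rle_trans (Rmin_l _ _) (r_le j).
Qed.

Lemma ord_pos_upper_bound n (f : 'I_n -> R) :
  exists M, 0 < M /\ forall i, f i <= M.
Proof.
elim: n f => [|n IH] f; first by exists 1; split; [lra | case].
have [M [M_pos le_M]] := IH (fun j => f (lift ord0 j)).
exists (Rmax M (f ord0)); split; first exact: Rlt_le_trans M_pos (Rmax_l _ _).
move=> i; case: (unliftP ord0 i) => [j ->|->]; last exact: Rmax_r.
exact: Rle_trans (le_M j) (Rmax_l _ _).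
Qed.

Lemma big_Rplus_ge0 n (f : 'I_n -> R) :
  (forall i, 0 <= f i) -> 0 <= \big[Rplus/0]_(i < n) f i.
Proof. by move=> f_ge0; apply: big_ind => //; [lra | move=> x y; lra]. Qed.

Lemma big_Rplus_ge_term n (f : 'I_n -> R) j :
  (forall i, 0 <= f i) -> f j <= \big[Rplus/0]_(i < n) f i.
Proof.
elim: n f j => [|n IH] f j f_ge0; first by case: j.
rewrite big_ord_recl; have := f_ge0 ord0.
case: (unliftP ord0 j) => [k ->|->] f0_ge0.
- have /= := IH (fun i => f (lift ord0 i)) k (fun i => f_ge0 _); lra.
- have /= := big_Rplus_ge0 (f := fun i => f (lift ord0 i)) (fun i => f_ge0 _); lra.
Qed.

Lemma big_Rplus_le_const n (f : 'I_n -> R) c :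
  (forall i, f i <= c) -> \big[Rplus/0]_(i < n) f i <= INR n * c.
Proof.
elim: n f => [|n IH] f le_c; first by rewrite big_ord0 /=; lra.
rewrite big_ord_recl S_INR.
have := IH (fun i => f (lift ord0 i)) (fun i => le_c _); have := le_c ord0; lra.
Qed.

Lemma metric_ball_open (V : Type) (d : V -> V -> R) :
  is_metric d -> forall a r, d_open d (fun y => d a y < r).
Proof.
move=> [_ [_ [_ triangle]]] a r y ay_lt.
exists (r - d a y); split => [|z yz_lt]; first lra.
have := triangle a y z; lra.
Qed.

Lemma fs_norm_sub (X : FSpace) (x y : X) : fs_norm (fs_sub x y) = fs_dist x y.
Proof.
have [_ [_ [_ [addrN _]]]] := fs_vs X.
by rewrite /fs_norm /fs_sub -(addrN y) fs_tinv.
Qed.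

Section DPhi.

Variable Phi : R -> R.
Hypothesis Phi_cont : forall x, continuity_pt Phi x.
Hypothesis Phi_incr : forall x y, 0 <= x -> x < y -> Phi x < Phi y.
Hypothesis Phi0 : Phi 0 = 0.
Hypothesis Phi_unbounded : forall M, exists N, forall x, N <= x -> M <= Phi x.

Lemma Phi_le x y : 0 <= x -> x <= y -> Phi x <= Phi y.
Proof.
move=> x_ge0 /Rle_lt_or_eq_dec [xy_lt|<-]; last exact: Rle_refl.
exact/Rlt_le/Phi_incr.
Qed.

Lemma Phi_ge0 x : 0 <= x -> 0 <= Phi x.
Proof. by move=> x_ge0; rewrite -Phi0; apply: Phi_le => //; apply: Rle_refl. Qed.

Lemma Phi_small e : 0 < e -> exists delta, 0 < delta /\ Phi delta < e.
Proof.
move=> e_pos; have [a [a_pos near0]] := Phi_cont 0 e_pos.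
exists (a / 2); split; first lra.
have : Rabs (Phi (a / 2) - Phi 0) < e.
  apply: (near0 (a / 2)); split; first by split; [done | lra].
  by rewrite /= /R_dist Rminus_0_r Rabs_pos_eq; lra.
by rewrite Phi0 Rminus_0_r => /Rabs_def2 [].
Qed.

(* By the intermediate value theorem Phi maps [0, oo) onto [0, oo), so the
   epsilon in Phi_inv picks a genuine preimage. *)
Lemma Phi_inv_spec S : 0 <= S -> 0 <= Phi_inv Phi S /\ Phi (Phi_inv Phi S) = S.
Proof.
move=> S_ge0; apply: (epsilon_spec (inhabits 0) (fun y => 0 <= y /\ Phi y = S)).
have [N le_Phi] := Phi_unbounded (S + 1).
have Phi_big := le_Phi (Rmax N 1) (Rmax_l _ _).
have one_le := Rmax_r N 1.
have cont : continuity (Phi - fct_cte S)%F.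
  by move=> x; apply: continuity_pt_minus => //; apply: continuity_pt_const.
have sign_change : (Phi - fct_cte S)%F 0 * (Phi - fct_cte S)%F (Rmax N 1) <= 0.
  by rewrite /minus_fct /fct_cte Phi0; nra.
have [z [z_in Phi_z]] := IVT_cor _ 0 (Rmax N 1) cont ltac:(lra) sign_change.
exists z; split; first lra.
by move: Phi_z; rewrite /minus_fct /fct_cte; lra.
Qed.

Lemma le_Phi_inv S d : 0 <= S -> 0 <= d -> Phi d <= S -> d <= Phi_inv Phi S.
Proof.
move=> S_ge0 d_ge0 Phi_d_le; have [inv_ge0 Phi_inv_S] := Phi_inv_spec S_ge0.
case: (Rle_or_lt d (Phi_inv Phi S)) => // inv_lt.
have := Phi_incr inv_ge0 inv_lt; lra.
Qed.

Lemma Phi_inv_lt S r : 0 <= S -> 0 <= r -> S < Phi r -> Phi_inv Phi S < r.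
Proof.
move=> S_ge0 r_ge0 S_lt; have [_ Phi_inv_S] := Phi_inv_spec S_ge0.
case: (Rlt_or_le (Phi_inv Phi S) r) => // r_le.
have := Phi_le r_ge0 r_le; lra.
Qed.

Variables (n : nat) (X : 'I_n -> FSpace).

Lemma d_PhiE (x y : dsum X) :
  d_Phi Phi x y = Phi_inv Phi (\big[Rplus/0]_(i < n) Phi (fs_dist (x i) (y i))).
Proof. by rewrite /d_Phi; under eq_bigr => i _ do rewrite fs_norm_sub. Qed.

Lemma Phi_fs_dist_ge0 (x y : dsum X) i : 0 <= Phi (fs_dist (x i) (y i)).
Proof. by apply: Phi_ge0; case: (fs_metric (X i)). Qed.

Lemma fs_dist_le_d_Phi (x y : dsum X) i : fs_dist (x i) (y i) <= d_Phi Phi x y.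
Proof.
rewrite d_PhiE; apply: le_Phi_inv; first exact: big_Rplus_ge0 (Phi_fs_dist_ge0 x y).
- by case: (fs_metric (X i)).
- exact: big_Rplus_ge_term (fun j => Phi (fs_dist (x j) (y j))) i (Phi_fs_dist_ge0 x y).
Qed.

Lemma d_Phi_lt_of_fs_dist_lt r : 0 < r -> exists delta, 0 < delta /\
  forall x y : dsum X, (forall i, fs_dist (x i) (y i) < delta) -> d_Phi Phi x y < r.
Proof.
move=> r_pos; have n_ge0 := pos_INR n.
pose e := Phi r / (INR n + 1).
have Phi_r : Phi r = e * (INR n + 1) by rewrite /e; field; lra.
have e_pos : 0 < e.
  by apply: Rdiv_lt_0_compat; [rewrite -Phi0; apply: Phi_incr; lra | lra].
have [delta [delta_pos Phi_delta]] := Phi_small e_pos.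
have Phi_delta_ge0 := Phi_ge0 (Rlt_le _ _ delta_pos).
exists delta; split => // x y close.
rewrite d_PhiE; apply: Phi_inv_lt; [exact: big_Rplus_ge0 (Phi_fs_dist_ge0 x y) | lra |].
have sum_le : \big[Rplus/0]_(i < n) Phi (fs_dist (x i) (y i)) <= INR n * Phi delta.
  apply: big_Rplus_le_const => i.
  by apply: Phi_le (Rlt_le _ _ (close i)); case: (fs_metric (X i)).
nra.
Qed.

End DPhi.

Definition bounded_set (V : Type) (zero : V) (smul : R -> V -> V)
  (d : V -> V -> R) (A : V -> Prop) : Prop :=
  forall U : V -> Prop, d_open d U -> U zero ->
    exists t, 0 < t /\ forall s, s > t -> forall x, A x -> scale_set smul s U x.

Section ProductLocallyBounded.

Variables (n : nat) (X : 'I_n -> FSpace) (D : dsum X -> dsum X -> R).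
Hypothesis fs_dist_le_D : forall x y i, fs_dist (x i) (y i) <= D x y.
Hypothesis D_lt_of_fs_dist_lt : forall r, 0 < r -> exists delta, 0 < delta /\
  forall x y, (forall i, fs_dist (x i) (y i) < delta) -> D x y < r.

Lemma dsum_open_prod (A : forall i, X i -> Prop) :
  (forall i, d_open (@fs_dist (X i)) (A i)) ->
  d_open D (fun x => forall i, A i (x i)).
Proof.
move=> A_open x Ax.
have [r r_spec] := choice _ (fun i => A_open i (x i) (Ax i)).
have [r0 [r0_pos r0_le]] := ord_pos_lower_bound (fun i => proj1 (r_spec i)).
exists r0; split => // y xy_lt i; apply: (proj2 (r_spec i)).
exact: Rle_lt_trans (fs_dist_le_D x y i) (Rlt_le_trans _ _ _ xy_lt (r0_le i)).
Qed.

Lemma dsum_bounded_prod (A : forall i, X i -> Prop) :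
  (forall i, bounded_set (fs_zero (X i)) (@fs_smul (X i)) (@fs_dist (X i)) (A i)) ->
  bounded_set (@dsum_zero n X) (@dsum_smul n X) D (fun x => forall i, A i (x i)).
Proof.
move=> A_bdd U U_open U0.
have [r [r_pos ball_U]] := U_open _ U0.
have [delta [delta_pos D_lt_r]] := D_lt_of_fs_dist_lt r_pos.
have ball_absorbs i : exists t, 0 < t /\ forall s, s > t -> forall x, A i x ->
    scale_set (@fs_smul (X i)) s (fun y => fs_dist (fs_zero (X i)) y < delta) x.
  apply: A_bdd; first exact: (metric_ball_open (fs_metric (X i))).
  by have [_ [dist0 _]] := fs_metric (X i); rewrite (proj2 (dist0 _ _) eq_refl).
have [t t_spec] := choice _ ball_absorbs.
have [M [M_pos le_M]] := ord_pos_upper_bound t.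
exists M; split => // s s_gt x Ax.
have [u u_spec] := non_dep_dep_functional_choice choice _ _
  (fun i => proj2 (t_spec i) s (Rle_lt_trans _ _ _ (le_M i) s_gt) (x i) (Ax i)).
exists u; split.
- by apply: ball_U; apply: D_lt_r => i; case: (u_spec i).
- by apply: functional_extensionality_dep => i; case: (u_spec i).
Qed.

Lemma dsum_locally_bounded :
  (forall i, FSpace_locally_bounded (X i)) ->
  locally_bounded (@dsum_zero n X) (@dsum_smul n X) D.
Proof.
move=> X_lb; have [A A_spec] := non_dep_dep_functional_choice choice _ _ X_lb.
exists (fun x => forall i, A i (x i)); split; [|split].
- by apply: dsum_open_prod => i; case: (A_spec i).
- by move=> i; case: (A_spec i) => _ [].
- by apply: dsum_bounded_prod => i; case: (A_spec i) => _ [].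
Qed.

End ProductLocallyBounded.

Theorem mainTheorem7 (n : nat) (X : 'I_n -> FSpace) (Phi : R -> R) :
  (forall i, FSpace_locally_bounded (X i)) ->
  young_function Phi -> mulholland Phi ->
  locally_bounded (@dsum_zero n X) (@dsum_smul n X) (@d_Phi Phi n X).
Proof.
move=> X_lb [_ [_ [_ [_ [Phi0 Phi_unbounded]]]]] [Phi_cont [Phi_incr _]].
apply: dsum_locally_bounded X_lb.
- exact: fs_dist_le_d_Phi.
- exact: d_Phi_lt_of_fs_dist_lt.
Qed.
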